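(* Let $X$ be a finite $T_0$ topological space, $\mathcal V$ a multivector field on $X$ with $X$ invariant, $\mathcal M=\{M_p\mid p\in\mathbb P\}$ a Morse predecomposition of $X$, and $\le$ an admissible preorder on $\mathbb P$. Let $\mathcal Q$ be a partition of $\mathbb P$ into nonempty subsets that are convex with respect to $\le$, and suppose that the relation $\le_{\mathcal Q}$ on $\mathcal Q$, defined by $Q\le_{\mathcal Q}Q'$ iff there exist $q\in Q$, $q'\in Q'$ with $q\le q'$, is a partial order. Then $\mathcal M':=\{M_Q\mid Q\in\mathcal Q\}$ is a Morse decomposition of $X$.
   Context: Notation: $\operatorname{cl}$ is closure; $A\subset X$ is locally closed if $\operatorname{cl}A\setminus A$ is closed. A multivector field $\mathcal V$ on $X$ is a partition of $X$ into locally closed sets (multivectors); $[x]_{\mathcal V}$ is the multivector containing $x$. A multivector $V$ is critical if $H(\operatorname{cl}V,\operatorname{cl}V\setminus V)$ (relative singular homology) is nontrivial, regular otherwise. $A$ is $\mathcal V$-compatible if it is a union of multivectors; $\langle A\rangle_{\mathcal V}$ is the smallest locally closed $\mathcal V$-compatible set containing $A$. $\Pi_{\mathcal V}(x)=\operatorname{cl}\{x\}\cup[x]_{\mathcal V}$. A solution is a partial map $\gamma:\mathbb Z\nrightarrow X$ with domain an integer interval and $\gamma(t+1)\in\Pi_{\mathcal V}(\gamma(t))$; a path has finite domain; a full solution has domain $\mathbb Z$. $\alpha(\gamma)=\langle\bigcap_{t\le0}\gamma((-\infty,t])\rangle_{\mathcal V}$, $\omega(\gamma)=\langle\bigcap_{t\ge0}\gamma([t,\infty))\rangle_{\mathcal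 V}$. A full solution is essential unless $\alpha(\gamma)$ or $\omega(\gamma)$ lies in a single regular multivector; an essential solution in $A$ is one with image in $A$. $\operatorname{Inv}S$ is the set of $x\in S$ with an essential solution $\gamma$ in $S$, $\gamma(0)=x$; $S$ is invariant if $\operatorname{Inv}S=S$. An invariant $S$ is isolated invariant if there is a closed $N\supset\Pi_{\mathcal V}(S)$ such that every path in $N$ with endpoints in $S$ has image in $S$. A full solution is a link from $S_1$ to $S_2$ if $\alpha(\gamma)\cap S_1\ne\emptyset\ne\omega(\gamma)\cap S_2$. A Morse predecomposition of $X$ is an indexed family of mutually disjoint isolated invariant subsets $\{M_p\mid p\in\mathbb P\}$ such that every essential solution in $X$ is a link from some $M_p$ to some $M_q$. A preorder $\le$ on $\mathbb P$ is admissible if a link from $M_p$ to $M_q$ implies $q\le p$. $\mathbb Q\subset\mathbb P$ is convex w.r.t. $\le$ if $p\le r\le q$ with $p,q\in\mathbb Q$ implies $r\in\mathbb Q$. An invariant $T$ is saturated if every essential solution $\gamma$ in $X$ with $\alpha(\gamma)\cup\omega(\gamma)\subset T$ has $\operatorname{im}\gamma\subset T$. A Morse decomposition is a Morse predecomposition with all members saturated and some admissible preorder being a partial order (here $\mathcal M'$ is indexed by $\mathcal Q$). For $C\subset X$, $\mathbb P_C=\{p\mid M_p\cap C\ne\emptyset\}$; for $\mathbb Q\subset\mathbb P$, $\operatorname{eSol}_{\mathbb Q}(X)$ is the set of essential solutions $\gamma$ in $X$ with $\mathbb P_{\alpha(\gamma)}\cap\mathbb Q\ne\emptyset\ne\mathbb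 P_{\omega(\gamma)}\cap\mathbb Q$, and $M_{\mathbb Q}=\bigcup\{\operatorname{im}\gamma\mid\gamma\in\operatorname{eSol}_{\mathbb Q}(X)\}$. *)

From HB Require Import structures.
From mathcomp Require Import all_boot all_order all_algebra.
From mathcomp Require Import all_classical all_reals all_analysis.
From mathcomp Require Import Rstruct Rstruct_topology.
Set Implicit Arguments. Unset Strict Implicit. Unset Printing Implicit Defensive.
Import Order.TTheory GRing.Theory Num.Theory.

Local Open Scope ring_scope.

(* For a finite carrier, closure under binary unions is closure under       *)
(* arbitrary unions.                                                        *)
Section FinTop.
Variable X : finType.
Variable opn : {set X} -> bool.

Definition is_topology : Prop :=
  [/\ opn finset.set0, opn [set: X],
      (forall U W, opn U -> opn W -> opn (U :&: W)) &
      (forall U W, opn U -> opn W -> opn (U :|: W))].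

Definition T0 : Prop :=
  forall x y : X, x != y -> exists U, opn U && ((x \in U) != (y \in U)).

Definition closedb (A : {set X}) : bool := opn (~: A).

Definition cl (A : {set X}) : {set X} :=
  \bigcap_(B | closedb B && (A \subset B)) B.

Definition locally_closed (A : {set X}) : Prop := closedb (cl A :\: A).

Definition RR := Rdefinitions.R.

Definition std_simplex (n : nat) : set 'rV[RR]_n.+1 :=
  [set t | (forall i, 0 <= t ord0 i) /\ \sum_i t ord0 i = 1].
Arguments std_simplex : clear implicits.

(* a (representative of a) singular n-simplex: a map on R^(n+1), only its  *)
(* values on the standard simplex matter                                     *)
Definition sing (n : nat) := 'rV[RR]_n.+1 -> X.

Definition cont_on_simplex n (s : sing n) : Prop :=
  forall U : {set X}, opn U ->
    exists W : set 'rV[RR]_n.+1, open W /\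
      forall t, std_simplex n t -> (s t \in U <-> W t).

Definition sing_in (A : {set X}) n (s : sing n) : Prop :=
  cont_on_simplex s /\ forall t, std_simplex n t -> s t \in A.

Definition schain n := seq (int * sing n).

(* coefficient of tau in a schain (singular simplices are equal iff they *)
(* agree on the standard simplex)                                          *)
Definition coef n (c : schain n) (tau : sing n) : int :=
  \sum_(p <- c) (if `[< forall t, std_simplex n t -> p.2 t = tau t >]
                 then p.1 else 0).

Definition face n (i : 'I_n.+2) (t : 'rV[RR]_n.+1) : 'rV[RR]_n.+2 :=
  \row_(j < n.+2) (if unlift i j is Some k then t ord0 k else 0).

Definition bd n (c : schain n.+1) : schain n :=
  flatten [seq [seq (((-1) ^+ i * p.1)%R, p.2 \o face i) | i : 'I_n.+2]
          | p <- c].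

Definition chain_in (A : {set X}) n (c : schain n) : Prop :=
  forall p, p \in c -> sing_in A p.2.

Definition supported_in (B : {set X}) n (c : schain n) : Prop :=
  forall tau, coef c tau != 0 -> forall t, std_simplex n t -> tau t \in B.

Definition rel_cycle (B : {set X}) (n : nat) : schain n -> Prop :=
  match n return schain n -> Prop with
  | 0 => fun _ => True
  | m.+1 => fun c => supported_in B (bd c)
  end.

Definition rel_homology_nontrivial (A B : {set X}) : Prop :=
  exists n (c : schain n), chain_in A c /\ rel_cycle B c /\
    ~ exists (d : schain n.+1) (e : schain n),
        chain_in A d /\ chain_in B e /\
        forall tau, coef c tau = coef (bd d ++ e) tau.

Variable V : {set {set X}}.

Definition multivector_field : Prop :=
  finset.partition V [set: X] /\ forall A, A \in V -> locally_closed A.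

Definition mv (x : X) : {set X} := finset.pblock V x.

Definition critical (A : {set X}) : Prop :=
  rel_homology_nontrivial (cl A) (cl A :\: A).
Definition mv_regular (A : {set X}) : Prop := ~ critical A.

Definition compatible (A : {set X}) : Prop :=
  forall x, x \in A -> mv x \subset A.

Definition compatibleb (A : {set X}) : bool := `[< compatible A >].
Definition locally_closedb (A : {set X}) : bool := `[< locally_closed A >].

Definition lcc_hull (A : {set X}) : {set X} :=
  \bigcap_(B | [&& locally_closedb B, compatibleb B & A \subset B]) B.

Definition Pi (x : X) : {set X} := cl [set x] :|: mv x.
Definition PiS (S : {set X}) : {set X} := \bigcup_(x in S) Pi x.

Definition full_solution (g : int -> X) : Prop :=
  forall t : int, g (t + 1) \in Pi (g t).

Definition alpha (g : int -> X) : {set X} :=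
  lcc_hull [set x | `[< forall t : int, exists2 s : int, s <= t & g s = x >]].
Definition omega (g : int -> X) : {set X} :=
  lcc_hull [set x | `[< forall t : int, exists2 s : int, t <= s & g s = x >]].

Definition in_single_regular (A : {set X}) : Prop :=
  exists2 W, W \in V & mv_regular W /\ A \subset W.

Definition essential (g : int -> X) : Prop :=
  full_solution g /\ ~ in_single_regular (alpha g) /\ ~ in_single_regular (omega g).

Definition essential_in (A : {set X}) (g : int -> X) : Prop :=
  essential g /\ forall t, g t \in A.

Definition InvS (S : {set X}) : {set X} :=
  [set x in S | `[< exists g, essential_in S g /\ g 0 = x >]].

Definition is_invariant (S : {set X}) : Prop := InvS S = S.

(* paths: finite solutions, given as nonempty sequences x0 :: s *)
Definition is_path (x0 : X) (s : seq X) : bool := path (fun x y => y \in Pi x) x0 s.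

Definition isolated_invariant (S : {set X}) : Prop :=
  is_invariant S /\
  exists N : {set X}, [/\ closedb N, PiS S \subset N &
    forall x0 s, is_path x0 s -> all (mem N) (x0 :: s) ->
      x0 \in S -> last x0 s \in S -> all (mem S) (x0 :: s)].

Definition link (g : int -> X) (S1 S2 : {set X}) : Prop :=
  full_solution g /\ alpha g :&: S1 != finset.set0 /\ omega g :&: S2 != finset.set0.

Definition morse_predecomposition (I : Type) (idx : set I) (M : I -> {set X}) : Prop :=
  [/\ (forall p, idx p -> isolated_invariant (M p)),
      (forall p q, idx p -> idx q -> p <> q -> [disjoint M p & M q]) &
      (forall g, essential g ->
         exists p q, [/\ idx p, idx q & link g (M p) (M q)])].

Definition admissible_preorder (I : Type) (idx : set I) (M : I -> {set X})
    (le : I -> I -> Prop) : Prop :=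
  [/\ (forall p, idx p -> le p p),
      (forall p q r, idx p -> idx q -> idx r -> le p q -> le q r -> le p r) &
      (forall g p q, idx p -> idx q -> link g (M p) (M q) -> le q p)].

Definition saturated (T : {set X}) : Prop :=
  is_invariant T /\
  forall g, essential g -> alpha g :|: omega g \subset T -> forall t, g t \in T.

Definition morse_decomposition (I : Type) (idx : set I) (M : I -> {set X}) : Prop :=
  [/\ morse_predecomposition idx M,
      (forall p, idx p -> saturated (M p)) &
      exists le, admissible_preorder idx M le /\
        (forall p q, idx p -> idx q -> le p q -> le q p -> p = q)].

Definition idxset (I : Type) (M : I -> {set X}) (C : {set X}) : set I :=
  [set p | M p :&: C != finset.set0].

Definition eSol (I : Type) (M : I -> {set X}) (Q : set I) (g : int -> X) : Prop :=
  essential g /\ (idxset M (alpha g) `&` Q !=set0)%classic /\ (idxset M (omega g) `&` Q !=set0)%classic.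

Definition MQ (I : Type) (M : I -> {set X}) (Q : set I) : {set X} :=
  [set x | `[< exists2 g, eSol M Q g & exists t, g t = x >]].

End FinTop.

Definition convex_wrt (I : Type) (le : I -> I -> Prop) (Q : set I) : Prop :=
  forall p r q, Q p -> Q q -> le p r -> le r q -> Q r.

Definition set_partition (I : Type) (QQ : set (set I)) : Prop :=
  [/\ (forall Q, QQ Q -> (Q !=set0)%classic),
      (forall p, exists2 Q, QQ Q & Q p) &
      (forall Q Q', QQ Q -> QQ Q' -> (Q `&` Q' !=set0)%classic -> Q = Q')].

Definition le_part (I : Type) (le : I -> I -> Prop) (Q Q' : set I) : Prop :=
  exists q q', [/\ Q q, Q' q' & le q q'].

Definition partial_order_on (I : Type) (idx : set I) (r : I -> I -> Prop) : Prop :=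
  [/\ (forall p, idx p -> r p p),
      (forall p q, idx p -> idx q -> r p q -> r q p -> p = q) &
      (forall p q s, idx p -> idx q -> idx s -> r p q -> r q s -> r p s)].

From HB Require Import structures.
From mathcomp Require Import all_boot all_order all_algebra.
From mathcomp Require Import all_classical all_reals all_analysis.
From mathcomp Require Import Rstruct Rstruct_topology.
From mathcomp Require Import zify.
Set Implicit Arguments. Unset Strict Implicit. Unset Printing Implicit Defensive.
Import Order.TTheory GRing.Theory Num.Theory.

(* A point lies in M_Q iff it ends a backward half-solution and starts a
   forward half-solution whose alpha- (resp. omega-) limit set is not inside a
   single regular multivector and meets some M_q with q in Q.  The backward
   property propagates forward along Pi and the forward one backward, so M_Q is
   invariant and contains every path between two of its points: it is isolated
   with N = X.  The points reachable both from and to a solution at arbitrarily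
   early (late) times form a set that is convex for the specialization preorder
   of the finite space, hence locally closed, and V-compatible; so it contains
   the alpha- (omega-) limit set.  Hence a link from M_Q to M_Q' yields a point
   with the backward property for Q and the forward one for Q', and
   admissibility gives Q' <= Q.  A point of M_p in M_Q gives such points for
   (Q, {p}) and ({p}, Q), so p lies between two elements of Q and convexity puts
   p in Q; this gives saturation. *)

Section FiniteTopology.
Variables (X : finType) (opn : {set X} -> bool).
Hypothesis top : is_topology opn.

Lemma open_bigcup (I : finType) (P : pred I) (F : I -> {set X}) :
  (forall i, P i -> opn (F i)) -> opn (\bigcup_(i | P i) F i).
Proof. by case: top => open0 _ _ openU openF; apply: (big_ind opn open0 openU). Qed.

Lemma open_bigcap (I : finType) (P : pred I) (F : I -> {set X}) :
  (forall i, P i -> opn (F i)) -> opn (\bigcap_(i | P i) F i).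
Proof. by case: top => _ openT openI _ openF; apply: (big_ind opn openT openI). Qed.

Lemma closed_cl (A : {set X}) : closedb opn (cl opn A).
Proof.
by rewrite /closedb /cl finset.setC_bigcap; apply: open_bigcup => B /andP[].
Qed.

Lemma subset_cl (A : {set X}) : A \subset cl opn A.
Proof. by apply/bigcapsP => B /andP[]. Qed.

Lemma cl_minimal (A C : {set X}) :
  closedb opn C -> A \subset C -> cl opn A \subset C.
Proof. by move=> closedC sAC; apply: finset.bigcap_inf; rewrite closedC sAC. Qed.

Lemma mem_cl1 (x : X) : x \in cl opn [set x].
Proof. by apply: (fintype.subsetP (subset_cl _)); rewrite inE. Qed.

Lemma cl_sub_bigcup_cl1 (B : {set X}) :
  cl opn B \subset \bigcup_(z in B) cl opn [set z].
Proof.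
apply: cl_minimal.
  by rewrite /closedb finset.setC_bigcup; apply: open_bigcap => z _; apply: closed_cl.
by apply/fintype.subsetP => z zB; apply/bigcupP; exists z => //; apply: mem_cl1.
Qed.

Definition min_nbhd (x : X) : {set X} := \bigcap_(W | opn W && (x \in W)) W.

Lemma open_min_nbhd x : opn (min_nbhd x).
Proof. by apply: open_bigcap => W /andP[]. Qed.

Lemma mem_min_nbhd x : x \in min_nbhd x.
Proof. by apply/bigcapP => W /andP[]. Qed.

Lemma min_nbhd_cl1 x y : y \in min_nbhd x -> x \in cl opn [set y].
Proof.
move=> /bigcapP ynbhd; apply: contraLR (mem_cl1 y) => xNcl.
by rewrite -finset.in_setC; apply: ynbhd; rewrite inE xNcl andbT; apply: closed_cl.
Qed.

Lemma specialization_convex_locally_closed (B : {set X}) :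
  (forall z1 w z2, z1 \in B -> z2 \in B ->
     w \in cl opn [set z1] -> z2 \in cl opn [set w] -> w \in B) ->
  locally_closed opn B.
Proof.
move=> convexB; rewrite /locally_closed /closedb.
set U := ~: _.
suff -> : U = \bigcup_(x in U) min_nbhd x.
  by apply: open_bigcup => x _; apply: open_min_nbhd.
apply/setP => y; apply/idP/bigcupP => [yU|[x xU /min_nbhd_cl1 xy]].
  by exists y => //; apply: mem_min_nbhd.
move: xU; rewrite /U !inE !negb_and !negbK => /orP[xB|xNclB].
  case: (boolP (y \in B)) => //= yNB.
  apply: contra yNB => /(fintype.subsetP (cl_sub_bigcup_cl1 B)).
  by case/bigcupP=> z zB yz; apply: (convexB z y x).
apply/orP; right; apply: contra xNclB => yclB.
apply: (fintype.subsetP (cl_minimal (closed_cl B) _)) xy.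
by rewrite finset.sub1set.
Qed.

End FiniteTopology.

Section Solutions.
Local Open Scope ring_scope.
Variables (X : finType) (opn : {set X} -> bool).
Hypothesis top : is_topology opn.
Variable V : {set {set X}}.
Hypothesis mvf : multivector_field opn V.

Local Notation Pi := (Pi opn V).
Local Notation full := (full_solution opn V).
Local Notation alpha := (alpha opn V).
Local Notation omega := (omega opn V).

Lemma mem_mv x : x \in mv V x.
Proof. by case: mvf => /and3P[/eqP coverV _ _] _; rewrite mem_pblock coverV. Qed.

Lemma mv_sym x y : y \in mv V x -> x \in mv V y.
Proof.
case: mvf => /and3P[/eqP coverV trivV _] _ yx.
by rewrite -(eqP (_ : mv V x == mv V y)) ?mem_mv // eq_pblock // coverV.
Qed.

Lemma Pi_mv x y : y \in mv V x -> y \in Pi x.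
Proof. by rewrite inE => ->; rewrite orbT. Qed.

Lemma Pi_cl1 x y : y \in cl opn [set x] -> y \in Pi x.
Proof. by rewrite inE => ->. Qed.

Lemma Pi_refl x : x \in Pi x.
Proof. exact/Pi_cl1/mem_cl1. Qed.

Definition Pi_rel : rel X := fun x y => y \in Pi x.

Local Notation reach := (connect Pi_rel).

Lemma path_reach x0 s y : is_path opn V x0 s -> y \in x0 :: s ->
  reach x0 y /\ reach y (last x0 s).
Proof.
move=> pth ys; case/splitPl: ys pth => s1 s2 <-.
rewrite /is_path cat_path last_cat => /andP[pth1 pth2].
by split; apply/connectP; [exists s1|exists s2].
Qed.

Lemma solution_reach g s s' : full g -> s <= s' -> reach (g s) (g s').
Proof.
move=> fg le_ss'.
have reach_n n : reach (g s) (g (s + n%:Z)).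
  elim: n => [|n IHn]; first by rewrite addr0.
  apply: connect_trans IHn (connect1 _).
  have -> : s + n.+1%:Z = s + n%:Z + 1 by lia.
  exact: fg.
by have := reach_n `|s' - s|%N; have -> : s + `|s' - s|%N%:Z = s' by lia.
Qed.

Lemma alpha_shift_tail (g h : int -> X) a c :
  (forall t, t <= c -> g t = h (t + a)) -> alpha g = alpha h.
Proof.
move=> gh; congr lcc_hull; apply/setP => x; rewrite !inE.
apply/asboolP/asboolP => rec t.
  have [s] := rec (Order.min (t - a) c); rewrite le_min => /andP[st sc] <-.
  by exists (s + a); [lia | rewrite gh].
have [s] := rec (Order.min t c + a); rewrite -lterBDr le_min => /andP[st sc] <-.
by exists (s - a) => //; rewrite gh // subrK.
Qed.

Lemma omega_reflect g : omega g = alpha (fun t => g (- t)).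
Proof.
congr lcc_hull; apply/setP => x; rewrite !inE.
apply/asboolP/asboolP => rec t; have [s st <-] := rec (- t).
  by exists (- s); [lia | rewrite opprK].
by exists (- s); first lia.
Qed.

Lemma omega_shift_tail (g h : int -> X) a c :
  (forall t, c <= t -> g t = h (t + a)) -> omega g = omega h.
Proof.
move=> gh; rewrite !omega_reflect; apply: (alpha_shift_tail (a := - a) (c := - c)).
by move=> t tc; rewrite gh; [congr h; lia | lia].
Qed.

Lemma alpha_shift g a : alpha (fun t => g (t + a)) = alpha g.
Proof. exact: (alpha_shift_tail (c := 0)). Qed.

Lemma omega_shift g a : omega (fun t => g (t + a)) = omega g.
Proof. exact: (omega_shift_tail (c := 0)). Qed.

Lemma full_shift g a : full g -> full (fun t => g (t + a)).
Proof. by move=> fg t; rewrite addrAC; apply: fg. Qed.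

Lemma full_const x : full (fun=> x).
Proof. by move=> t; apply: Pi_refl. Qed.

Definition glue (h1 h2 : int -> X) (t : int) := if t <= 0 then h1 t else h2 t.

Lemma full_glue h1 h2 :
  full h1 -> full h2 -> h2 1 \in Pi (h1 0) -> full (glue h1 h2).
Proof.
move=> f1 f2 h1h2 t; rewrite /glue.
case: (lerP t 0) => t0; case: (lerP (t + 1) 0) => t10; try lia.
- exact: f1.
- by have -> : t = 0 by lia.
- exact: f2.
Qed.

Lemma full_glue_eq h1 h2 : full h1 -> full h2 -> h1 0 = h2 0 -> full (glue h1 h2).
Proof. by move=> f1 f2 e; apply: full_glue; rewrite // e; apply: (f2 0). Qed.

Lemma alpha_glue h1 h2 : alpha (glue h1 h2) = alpha h1.
Proof.
by apply: (alpha_shift_tail (a := 0) (c := 0)) => t t0; rewrite /glue t0 addr0.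
Qed.

Lemma omega_glue h1 h2 : omega (glue h1 h2) = omega h2.
Proof.
apply: (omega_shift_tail (a := 0) (c := 1)) => t t1; rewrite /glue addr0.
by have -> : (t <= 0) = false by lia.
Qed.

Lemma lcc_hull_min (A B : {set X}) : locally_closed opn B -> compatible V B ->
  A \subset B -> lcc_hull opn V A \subset B.
Proof.
move=> lcB compB AB; apply: finset.bigcap_inf.
by rewrite /locally_closedb /compatibleb !asboolT.
Qed.

Lemma subset_lcc_hull (A : {set X}) : A \subset lcc_hull opn V A.
Proof. by apply/bigcapsP => B /and3P[]. Qed.

Lemma lcc_hull_recurrent_reach (late : int -> int -> Prop) (g : int -> X) x :
  x \in lcc_hull opn V [set y | `[< forall t, exists2 s, late t s & g s = y >]] ->
  (forall t, exists2 s, late t s & reach (g s) x) /\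
  (forall t, exists2 s, late t s & reach x (g s)).
Proof.
pose B := [set z | `[< (forall t, exists2 s, late t s & reach (g s) z) /\
                       (forall t, exists2 s, late t s & reach z (g s)) >]].
have B_between z1 w z2 : z1 \in B -> z2 \in B -> reach z1 w -> reach w z2 -> w \in B.
  rewrite !finset.in_set => /asboolP[from1 _] /asboolP[_ to2] z1w wz2.
  apply/asboolP; split=> t.
    by have [s ts gz1] := from1 t; exists s => //; apply: connect_trans z1w.
  by have [s ts z2g] := to2 t; exists s => //; apply: connect_trans z2g.
suff lccB : lcc_hull opn V [set y | `[< forall t, exists2 s, late t s & g s = y >]]
             \subset B.
  by move=> /(fintype.subsetP lccB); rewrite finset.in_set => /asboolP.
apply: lcc_hull_min.
- apply: (specialization_convex_locally_closed top) => z1 w z2 z1B z2B wz1 z2w.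
  by apply: (B_between z1 w z2) => //; apply/connect1/Pi_cl1.
- move=> z zB; apply/fintype.subsetP => w wz.
  by apply: (B_between z w z) => //; apply/connect1/Pi_mv; last apply: mv_sym.
- apply/fintype.subsetP => z; rewrite !finset.in_set => /asboolP rec; apply/asboolP.
  by split=> t; have [s ts <-] := rec t; exists s.
Qed.

Lemma alpha_reach g x t : x \in alpha g -> exists2 s, s <= t & reach x (g s).
Proof.
by move=> /(lcc_hull_recurrent_reach (late := fun t s => s <= t))[_ to]; apply: to.
Qed.

Lemma omega_reach g x t : x \in omega g -> exists2 s, t <= s & reach (g s) x.
Proof.
by move=> /(lcc_hull_recurrent_reach (late := fun t s => t <= s))[from _]; apply: from.
Qed.

Lemma recurrent_value (g : int -> X) :
  exists x, forall t, exists2 s, s <= t & g s = x.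
Proof.
(* Otherwise every value is left for good, and no value is taken at or
   before the earliest of the leaving times. *)
apply: contrapT => noRec.
have leaves x : exists t, forall s, s <= t -> g s <> x.
  apply: contrapT => stays; apply: noRec; exists x => t.
  apply: contrapT => away; apply: stays; exists t => s st gs; apply: away.
  by exists s.
have [leave leaveP] := choice leaves.
case: (@arg_minP _ _ _ (g 0) xpredT leave isT) => x0 _ minx0.
by apply: (leaveP (g (leave x0)) (leave x0)) => //; apply: minx0.
Qed.

Lemma alpha_meets g (S : {set X}) :
  (forall t, g t \in S) -> exists2 x, x \in alpha g & x \in S.
Proof.
move=> gS; have [x rec] := recurrent_value g.
exists x; last by have [s _ <-] := rec 0.
by apply: (fintype.subsetP (subset_lcc_hull _)); rewrite inE; apply/asboolP.
Qed.

Lemma omega_meets g (S : {set X}) :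
  (forall t, g t \in S) -> exists2 x, x \in omega g & x \in S.
Proof. by move=> gS; rewrite omega_reflect; apply: alpha_meets. Qed.

Lemma link_subset g (S1 S2 T1 T2 : {set X}) :
  S1 \subset T1 -> S2 \subset T2 -> link opn V g S1 S2 -> link opn V g T1 T2.
Proof.
move=> /fintype.subsetP sub1 /fintype.subsetP sub2.
move=> [fg [/set0Pn[x /setIP[xa xS]] /set0Pn[y /setIP[yo yS]]]].
split=> //; split; apply/set0Pn.
  by exists x; rewrite inE xa sub1.
by exists y; rewrite inE yo sub2.
Qed.

Section MorseSets.
Variables (P : Type) (M : P -> {set X}).

Definition comes_from (Q : set P) (y : X) := exists h, [/\ full h, h 0 = y,
  ~ in_single_regular opn V (alpha h) & (idxset M (alpha h) `&` Q !=set0)%classic].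

Definition goes_to (Q : set P) (y : X) := exists h, [/\ full h, h 0 = y,
  ~ in_single_regular opn V (omega h) & (idxset M (omega h) `&` Q !=set0)%classic].

Lemma comes_from_step Q x y : y \in Pi x -> comes_from Q x -> comes_from Q y.
Proof.
move=> xy [h [fh h0 ha hQ]].
exists (fun t => glue h (fun=> y) (t + 1)); rewrite alpha_shift alpha_glue.
split=> //; apply: full_shift; apply: full_glue; rewrite ?h0 //.
exact: full_const.
Qed.

Lemma goes_to_step Q x y : y \in Pi x -> goes_to Q y -> goes_to Q x.
Proof.
move=> xy [h [fh h0 ho hQ]].
exists (glue (fun=> x) (fun t => h (t - 1))); rewrite omega_glue omega_shift.
split=> //; apply: full_glue; rewrite ?subrr ?h0 //.
  exact: full_const.
exact: full_shift.
Qed.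

Lemma comes_from_reach Q x y : reach x y -> comes_from Q x -> comes_from Q y.
Proof.
case/connectP=> s + ->; elim: s x => [|z s IHs] x //= /andP[xz pth] cx.
exact/(IHs z pth)/(comes_from_step xz).
Qed.

Lemma goes_to_reach Q x y : reach x y -> goes_to Q y -> goes_to Q x.
Proof.
case/connectP=> s + ->; elim: s x => [|z s IHs] x //= /andP[xz pth] gy.
exact/(goes_to_step xz)/(IHs z pth).
Qed.

Lemma eSol_through Q x :
  comes_from Q x -> goes_to Q x -> exists2 G, eSol opn V M Q G & G 0 = x.
Proof.
move=> [h1 [f1 e1 a1 Q1]] [h2 [f2 e2 o2 Q2]].
have fG := full_glue_eq f1 f2 (etrans e1 (esym e2)).
exists (glue h1 h2); last by rewrite /glue lexx.
by rewrite /eSol /essential alpha_glue omega_glue.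
Qed.

Lemma mem_MQ_eSol Q G t : eSol opn V M Q G -> G t \in MQ opn V M Q.
Proof. by move=> QG; rewrite inE; apply/asboolP; exists G => //; exists t. Qed.

Lemma MQP Q x : x \in MQ opn V M Q <-> comes_from Q x /\ goes_to Q x.
Proof.
split=> [|[cx gx]]; last first.
  by have [G QG <-] := eSol_through cx gx; apply: mem_MQ_eSol.
rewrite inE => /asboolP[g [[fg [ga go]] [gQa gQo]] [t <-]].
have fgt := full_shift t fg.
by split; exists (fun s => g (s + t)); rewrite ?alpha_shift ?omega_shift add0r.
Qed.

Lemma MQ_invariant Q : is_invariant opn V (MQ opn V M Q).
Proof.
apply/setP => x; rewrite inE; apply/andP/idP => [[]//|xQ]; split=> //.
have [cx gx] := (MQP Q x).1 xQ; have [G QG G0] := eSol_through cx gx.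
by apply/asboolP; exists G; split=> //; split=> [|t]; [case: QG | apply: mem_MQ_eSol].
Qed.

Lemma MQ_isolated Q : isolated_invariant opn V (MQ opn V M Q).
Proof.
split; first exact: MQ_invariant.
exists [set: X]; split; last 1 first.
- move=> x0 s pth _ x0Q lastQ; apply/allP => y ys.
  have [x0y ylast] := path_reach pth ys.
  have [cx0 _] := (MQP Q x0).1 x0Q; have [_ glast] := (MQP Q _).1 lastQ.
  by apply/MQP; split; [apply: comes_from_reach cx0 | apply: goes_to_reach glast].
- by rewrite /closedb finset.setCT; case: top.
- exact: finset.subsetT.
Qed.

Lemma link_MQ_through g Q Q' :
  link opn V g (MQ opn V M Q) (MQ opn V M Q') ->
  exists2 y, comes_from Q y & goes_to Q' y.
Proof.
move=> [fg [/set0Pn[x /setIP[xa xQ]] /set0Pn[y /setIP[yo yQ']]]].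
have [s _ xgs] := alpha_reach 0 xa; have [s' ss' gs'y] := omega_reach s yo.
have xy := connect_trans (connect_trans xgs (solution_reach fg ss')) gs'y.
exists y; last by case: ((MQP Q' y).1 yQ').
by apply: comes_from_reach xy _; case: ((MQP Q x).1 xQ).
Qed.

Section Predecomposition.
Variable le : P -> P -> Prop.
Hypothesis Mpre : morse_predecomposition opn V [set: P] M.
Hypothesis adm : admissible_preorder opn V [set: P] M le.

Lemma through_le_part Q Q' y : comes_from Q y -> goes_to Q' y -> le_part le Q' Q.
Proof.
move=> [h1 [f1 e1 a1 [p1 [i1 Qp1]]]] [h2 [f2 e2 o2 [p2 [i2 Q'p2]]]].
have fG := full_glue_eq f1 f2 (etrans e1 (esym e2)).
exists p2, p1; split=> //; case: adm => _ _ link_le.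
apply: (link_le (glue h1 h2)) => //.
by split=> //; rewrite alpha_glue omega_glue finset.setIC [_ :&: M p2]finset.setIC.
Qed.

Lemma mem_M_through (Q : set P) p x :
  Q p -> x \in M p -> comes_from Q x /\ goes_to Q x.
Proof.
case: Mpre => isoM _ _ Qp.
rewrite -{1}(isoM p I).1 inE => /andP[_ /asboolP[k [[[fk [ka ko]] kMp] k0]]].
have [y ya yp] := alpha_meets kMp; have [z zo zp] := omega_meets kMp.
split; exists k; split=> //; exists p; split=> //; apply/set0Pn.
  by exists y; rewrite inE yp.
by exists z; rewrite inE zp.
Qed.

Lemma M_subset_MQ (Q : set P) p : Q p -> M p \subset MQ opn V M Q.
Proof.
by move=> Qp; apply/fintype.subsetP => x xp; apply/MQP; apply: mem_M_through Qp xp.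
Qed.

Lemma mem_MQ_index (Q : set P) p x :
  convex_wrt le Q -> x \in M p -> x \in MQ opn V M Q -> Q p.
Proof.
move=> convQ xp /MQP[cQ gQ].
have [cp gp] := mem_M_through (Q := [set p]) erefl xp.
have [_ [q [-> Qq pq]]] := through_le_part cQ gp.
have [q' [_ [Qq' -> q'p]]] := through_le_part cp gQ.
exact: convQ Qq' Qq q'p pq.
Qed.

Lemma MQ_saturated (Q : set P) : convex_wrt le Q -> saturated opn V (MQ opn V M Q).
Proof.
move=> convQ; split=> [|g eg /fintype.subsetP sub t]; first exact: MQ_invariant.
case: Mpre => _ _ /(_ g eg)[p [q [_ _ [_ [/set0Pn[x /setIP[xa xp]]]]]]].
move=> /set0Pn[y /setIP[yo yq]].
have Qp : Q p by apply: mem_MQ_index convQ xp (sub x _); rewrite inE xa.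
have Qq : Q q by apply: mem_MQ_index convQ yq (sub y _); rewrite inE yo orbT.
apply: mem_MQ_eSol; split=> //; split.
  by exists p; split=> //; apply/set0Pn; exists x; rewrite inE xp.
by exists q; split=> //; apply/set0Pn; exists y; rewrite inE yq.
Qed.

Lemma link_le_part g Q Q' :
  link opn V g (MQ opn V M Q) (MQ opn V M Q') -> le_part le Q' Q.
Proof. by case/link_MQ_through => y; apply: through_le_part. Qed.

Lemma MQ_common_le_part Q Q' x :
  x \in MQ opn V M Q -> x \in MQ opn V M Q' -> le_part le Q Q' /\ le_part le Q' Q.
Proof.
move=> /MQP[cQ gQ] /MQP[cQ' gQ'].
by split; [apply: through_le_part cQ' gQ | apply: through_le_part cQ gQ'].
Qed.

Lemma essential_link_MQ (QQ : set (set P)) g :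
  (forall p, exists2 Q, QQ Q & Q p) -> essential opn V g ->
  exists Q Q', [/\ QQ Q, QQ Q' & link opn V g (MQ opn V M Q) (MQ opn V M Q')].
Proof.
case: Mpre => _ _ Mlink cover /Mlink[p [q [_ _ linkpq]]].
have [Q QQQ Qp] := cover p; have [Q' QQQ' Q'q] := cover q.
by exists Q, Q'; split=> //; apply: link_subset linkpq; apply: M_subset_MQ.
Qed.

End Predecomposition.
End MorseSets.
End Solutions.

Unset Implicit Arguments.

Theorem theorem4p13 (X : finType) (opn : {set X} -> bool)
  (V : {set {set X}}) (P : Type) (M : P -> {set X}) (le : P -> P -> Prop)
  (QQ : set (set P)) :
  is_topology opn -> T0 opn ->
  multivector_field opn V ->
  is_invariant opn V (finset.setT : {set X}) ->
  morse_predecomposition opn V [set: P] M ->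
  admissible_preorder opn V [set: P] M le ->
  set_partition QQ ->
  (forall Q, QQ Q -> convex_wrt le Q) ->
  partial_order_on QQ (le_part le) ->
  morse_decomposition opn V QQ (MQ opn V M).
Proof.
move=> top _ mvf _ Mpre adm [_ cover _] convQQ [QQrefl QQanti QQtrans].
split.
- split=> [Q _|Q Q' QQQ QQQ' neqQ|g eg].
  + exact: (MQ_isolated top).
  + rewrite -setI_eq0; apply/set0Pn => -[x /setIP[xQ xQ']]; apply: neqQ.
    by have [QQ' Q'Q] := MQ_common_le_part adm xQ xQ'; apply: QQanti.
  + exact: (essential_link_MQ Mpre cover eg).
- move=> Q QQQ; exact: (MQ_saturated Mpre adm (convQQ Q QQQ)).
- exists (le_part le); split=> //; split=> // g Q Q' _ _.
  exact: (link_le_part top mvf adm).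
Qed.
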